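(* Assume the thermal noise in the data phase is zero, $\mathbf N_D=\mathbf 0$, so that $\mathbf Y_D=\mathbf H\mathbf S_D+\mathbf J\mathbf W_D$. If the jammer is not eclipsed (in the sense of eclipsing with perfect CSI defined in the context), then the optimization problem $$\min_{\tilde{\mathbf S}_D\in\mathcal S^{U\times D},\ \tilde{\mathbf P}\in\mathscr G_{B-I}(\mathbb C^B)}\ \big\|\tilde{\mathbf P}(\mathbf Y_D-\mathbf H\tilde{\mathbf S}_D)\big\|_F^2$$ has the unique minimizer $(\hat{\mathbf P},\hat{\mathbf S}_D)=(\mathbf I_B-\mathbf J\mathbf J^\dagger,\ \mathbf S_D)$.
   Context: Let $B,U,I,D$ be positive integers with $B\ge U+I$. Let $\mathcal S=\{(\pm1\pm i)/\sqrt2\}\subset\mathbb C$ (QPSK). Let $\mathbf H\in\mathbb C^{B\times U}$ and $\mathbf J\in\mathbb C^{B\times I}$ be such that the concatenation $[\mathbf H,\mathbf J]\in\mathbb C^{B\times(U+I)}$ has full column rank $U+I$. Let $\mathbf S_D\in\mathcal S^{U\times D}$ (data matrix), $\mathbf W_D\in\mathbb C^{I\times D}$ (jammer transmit matrix), $\mathbf N_D\in\mathbb C^{B\times D}$, and $\mathbf Y_D=\mathbf H\mathbf S_D+\mathbf J\mathbf W_D+\mathbf N_D$. $\mathbf A^\dagger$ is the Moore–Penrose pseudoinverse. $\mathscr G_{B-I}(\mathbb C^B)$ denotes the set of $B\times B$ orthogonal projection matrices onto $(B-I)$-dimensional subspaces of $\mathbb C^B$, i.e. matrices $\mathbf I_B-\mathbf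 Q\mathbf Q^{\mathrm H}$ with $\mathbf Q\in\mathbb C^{B\times I}$ having orthonormal columns. Eclipsing with perfect CSI: the jammer is eclipsed if there exists $\tilde{\mathbf S}_D\in\mathcal S^{U\times D}\setminus\{\mathbf S_D\}$ such that the vertically stacked matrix $\begin{bmatrix}\mathbf S_D-\tilde{\mathbf S}_D\\ \mathbf W_D\end{bmatrix}\in\mathbb C^{(U+I)\times D}$ has rank at most $I$. *)

From mathcomp Require Import all_boot all_algebra complex reals.
Import GRing.Theory Num.Theory.
Set Implicit Arguments. Unset Strict Implicit. Unset Printing Implicit Defensive.
Local Open Scope ring_scope.

Section Defs.
Variable R : realType.
Notation C := (R[i]).

Definition adjmx m n (A : 'M[C]_(m, n)) : 'M[C]_(n, m) := (map_mx Num.conj A)^T.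

Definition qpsk (x : C) : Prop :=
  exists a b : bool, x = ((-1) ^+ a + (-1) ^+ b * 'i) / sqrtC 2.

Definition qpsk_mx m n (S : 'M[C]_(m, n)) : Prop := forall i j, qpsk (S i j).

Definition is_pinv m n (A : 'M[C]_(m, n)) (X : 'M[C]_(n, m)) : Prop :=
  [/\ A *m X *m A = A, X *m A *m X = X,
      adjmx (A *m X) = A *m X & adjmx (X *m A) = X *m A].

(* grass_proj B k P : P is in G_k(C^B), i.e. P = I_B - Q Q^H with
   Q in C^{B x (B-k)} having orthonormal columns (orthogonal projection onto a
   k-dimensional subspace). *)
Definition grass_proj (B k : nat) (P : 'M[C]_B) : Prop :=
  exists Q : 'M[C]_(B, B - k), adjmx Q *m Q = 1%:M /\ P = 1%:M - Q *m adjmx Q.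

Definition frob2 m n (A : 'M[C]_(m, n)) : C := \sum_i \sum_j `|A i j| ^+ 2.

Definition eclipsed (U I D : nat) (SD : 'M[C]_(U, D)) (WD : 'M[C]_(I, D)) : Prop :=
  exists St : 'M[C]_(U, D),
    [/\ qpsk_mx St, St <> SD & (\rank (col_mx (SD - St) WD) <= I)%N].

End Defs.
Arguments grass_proj {R} B k P.

From mathcomp Require Import all_boot order all_algebra complex reals.
Import Order.TTheory GRing.Theory Num.Theory.
Local Open Scope ring_scope.
Local Open Scope sesquilinear_scope.

Set Implicit Arguments.
Unset Strict Implicit.
Unset Printing Implicit Defensive.

(* Let P = I - Q Q^H with Q^H Q = 1.  If P (Y - H S~) = 0 then
   Y - H S~ = [H J] [S - S~; W] has rank at most I; as [H J] has full column
   rank, [S - S~; W] has the same rank, and absence of eclipsing forces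
   S~ = S.  Flipping the sign of one QPSK symbol changes S by a rank-one
   matrix, so absence of eclipsing also forces W to have full row rank; then
   P J W = 0 gives P J = 0: the range of J, of dimension I, lies in that of Q,
   hence equals it.  Two
   Hermitian P1, P2 with P1 P2 = P2 and P2 P1 = P1 coincide, which identifies
   Q Q^H with J J^+; Gram-Schmidt on the columns of J provides such a Q, so
   I - J J^+ is itself in the Grassmannian. *)

Section ColumnRank.
Variable F : fieldType.

Lemma mxrank_mulfree_l m n p (A : 'M[F]_(m, n)) (B : 'M[F]_(n, p)) :
  \rank A = n -> \rank (A *m B) = \rank B.
Proof.
move=> rA; rewrite -mxrank_tr trmx_mul mxrankMfree ?mxrank_tr //.
by rewrite /row_free mxrank_tr rA.
Qed.

Lemma rank_row_mx_fullr m n1 n2 (A : 'M[F]_(m, n1)) (B : 'M[F]_(m, n2)) :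
  \rank (row_mx A B) = (n1 + n2)%N -> \rank B = n2.
Proof.
move=> rAB; have -> : B = row_mx A B *m col_mx 0 1%:M.
  by rewrite mul_row_col mulmx0 mulmx1 add0r.
by rewrite mxrank_mulfree_l // rank_col_0mx mxrank1.
Qed.

End ColumnRank.

Section HermitianProjection.
Variable C : numClosedFieldType.

Lemma trmxC_mul m n p (A : 'M[C]_(m, n)) (B : 'M[C]_(n, p)) :
  (A *m B)^t* = B^t* *m A^t*.
Proof. by rewrite trmx_mul map_mxM. Qed.

Lemma hermitian_proj_eq n (P1 P2 : 'M[C]_n) :
  P1^t* = P1 -> P2^t* = P2 -> P1 *m P2 = P2 -> P2 *m P1 = P1 -> P1 = P2.
Proof. by move=> h1 h2 e12 e21; rewrite -e21 -{1}h1 -{1}h2 -trmxC_mul e12 h2. Qed.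

End HermitianProjection.

Section Jamming.
Variable R : realType.
Local Notation C := R[i].

Lemma adjmxE m n (A : 'M[C]_(m, n)) : adjmx A = A^t*.
Proof. exact: map_trmx. Qed.

Lemma frob2_ge0 m n (A : 'M[C]_(m, n)) : 0 <= frob2 A.
Proof. by do 2![apply: sumr_ge0 => ? _]; apply: exprn_ge0. Qed.

Lemma frob2_eq0 m n (A : 'M[C]_(m, n)) : (frob2 A == 0) = (A == 0).
Proof.
have sqr_ge0 i j : 0 <= `|A i j| ^+ 2 by apply: exprn_ge0.
apply/eqP/eqP=> [A0|->]; last first.
  by do 2![apply: big1 => ? _]; rewrite mxE normr0 expr0n.
apply/matrixP => i j; rewrite mxE.
have /psumr_eq0P Ai0 : \sum_l `|A i l| ^+ 2 = 0.
  by apply: (psumr_eq0P _ A0) => // k _; apply: sumr_ge0.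
move: (Ai0 (fun l _ => sqr_ge0 i l) j isT) => /eqP.
by rewrite sqrf_eq0 normr_eq0 => /eqP.
Qed.

Lemma qpskN (x : C) : qpsk x -> qpsk (- x).
Proof.
by case=> a [b ->]; exists (~~ a), (~~ b); rewrite !signrN mulNr -opprD mulNr.
Qed.

Lemma qpsk_neq0 (x : C) : qpsk x -> x != 0.
Proof.
case=> a [b ->]; rewrite mulf_eq0 invr_eq0 sqrtC_eq0 pnatr_eq0 orbF.
apply/negP => /eqP /(canRL (addKr _)); rewrite addr0 => /(congr1 (fun z => z ^+ 2)).
rewrite exprMn sqrCi sqrrN !sqrr_sign mul1r => /eqP.
by rewrite -subr_eq0 -opprD oppr_eq0 -mulr2n mulrn_eq0 oner_eq0.
Qed.

Lemma grass_projP B n (P : 'M[C]_B) : (n <= B)%N ->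
  grass_proj B (B - n) P <->
  exists Q : 'M[C]_(B, n), Q^t* \is unitarymx /\ P = 1%:M - Q *m Q^t*.
Proof.
move=> le_nB; rewrite /grass_proj subKn //.
have unitaryE (Q : 'M[C]_(B, n)) : Q^t* \is unitarymx <-> adjmx Q *m Q = 1%:M.
  by rewrite adjmxE qualifE trmxCK; split=> /eqP.
by split=> -[Q [/unitaryE Qu ->]]; exists Q; split; rewrite // adjmxE.
Qed.

Lemma grass_proj_kernel_rank B n m (P : 'M[C]_B) (X : 'M[C]_(B, m)) :
  (n <= B)%N -> grass_proj B (B - n) P -> P *m X = 0 -> (\rank X <= n)%N.
Proof.
move=> le_nB /(grass_projP _ le_nB) [Q [_ ->]].
rewrite mulmxBl mul1mx => /subr0_eq ->.
by rewrite -mulmxA (leq_trans (mxrankM_maxl _ _)) ?rank_leq_col.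
Qed.

Lemma pinv_projE B I n (J : 'M[C]_(B, I)) Jdag (Q : 'M[C]_(B, n)) :
  is_pinv J Jdag -> Q^t* \is unitarymx -> (Q^t* == J^t*)%MS ->
  Q *m Q^t* = J *m Jdag.
Proof.
case=> JJdJ _ JJd_herm _ /unitarymxP; rewrite trmxCK => QtQ /andP[QJ JQ].
have [M /(congr1 (fun A => A^t*))] := submxP QJ; rewrite trmxC_mul !trmxCK => eQ.
have [N /(congr1 (fun A => A^t*))] := submxP JQ; rewrite trmxC_mul !trmxCK => eJ.
have QQtJ : Q *m Q^t* *m J = J.
  by rewrite {1}eJ mulmxA -(mulmxA Q) QtQ mulmx1 -eJ.
have JJdQ : J *m Jdag *m Q = Q by rewrite {1}eQ mulmxA JJdJ -eQ.
apply: hermitian_proj_eq.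
- by rewrite trmxC_mul trmxCK.
- by rewrite -adjmxE.
- by rewrite mulmxA QQtJ.
- by rewrite mulmxA JJdQ.
Qed.

Lemma pinv_grass_proj B I (J : 'M[C]_(B, I)) Jdag :
  \rank J = I -> is_pinv J Jdag -> grass_proj B (B - I) (1%:M - J *m Jdag).
Proof.
move=> rJ pJ; have le_IB : (I <= B)%N by rewrite -rJ rank_leq_row.
have Su : schmidt (J^t*) \is unitarymx by apply: schmidt_unitarymx.
apply/grass_projP => //; exists ((schmidt (J^t*))^t*).
split; first by rewrite trmxCK.
rewrite (pinv_projE pJ) ?trmxCK //; apply/eqmxP/eqmx_schmidt_free.
by rewrite /row_free mxrank_map mxrank_tr rJ.
Qed.

Lemma grass_proj_pinvE B I (J : 'M[C]_(B, I)) Jdag (P : 'M[C]_B) :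
  \rank J = I -> is_pinv J Jdag -> grass_proj B (B - I) P -> P *m J = 0 ->
  P = 1%:M - J *m Jdag.
Proof.
move=> rJ pJ; have le_IB : (I <= B)%N by rewrite -rJ rank_leq_row.
case/grass_projP=> // Q [Qu ->]; rewrite mulmxBl mul1mx => /subr0_eq eJ.
have JQ : (J^t* <= Q^t*)%MS.
  by apply/submxP; exists (J^t* *m Q); rewrite {1}eJ !trmxC_mul trmxCK mulmxA.
rewrite (pinv_projE pJ Qu) //; apply/eqmxP/eqmx_sym/eqmxP.
by rewrite -mxrank_leqif_eq // (mxrank_unitary Qu) mxrank_map mxrank_tr rJ.
Qed.

Lemma not_eclipsed_row_free U I D (SD : 'M[C]_(U, D)) (WD : 'M[C]_(I, D)) :
  (0 < U)%N -> (0 < D)%N -> qpsk_mx SD -> ~ eclipsed SD WD -> row_free WD.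
Proof.
move=> U_gt0 D_gt0 qS; apply: contra_notT => WD_nfree.
pose i0 := Ordinal U_gt0; pose j0 := Ordinal D_gt0.
pose St := SD - (SD i0 j0 *+ 2) *: delta_mx i0 j0.
have St_ij i j : St i j = if (i == i0) && (j == j0) then - SD i j else SD i j.
  rewrite !mxE; case: ifP => [/andP[/eqP-> /eqP->]|_]; last by rewrite mulr0 subr0.
  by rewrite mulr1 mulr2n opprD addrA subrr add0r.
exists St; split.
- by move=> i j; rewrite St_ij; case: ifP => _; [apply: qpskN | apply: qS].
- move/matrixP/(_ i0 j0); rewrite St_ij !eqxx => /eqP.
  by rewrite eq_sym -addr_eq0 -mulr2n mulrn_eq0 (negPf (qpsk_neq0 (qS i0 j0))).
- have -> : col_mx (SD - St) WD = col_mx (SD - St) 0 + col_mx 0 WD.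
    by rewrite add_col_mx addr0 add0r.
  rewrite (leq_trans (mxrank_add _ _)) // rank_col_mx0 rank_col_0mx.
  rewrite opprB addrC subrK (leq_trans (leq_add (mxrank_scale _ _) (leqnn _))) //.
  by rewrite mxrank_delta add1n ltn_neqAle WD_nfree rank_leq_row.
Qed.

End Jamming.

Theorem theorem1 (R : realType) (B U I D : nat)
  (H : 'M[R[i]]_(B, U)) (J : 'M[R[i]]_(B, I))
  (SD : 'M[R[i]]_(U, D)) (WD : 'M[R[i]]_(I, D)) (Jdag : 'M[R[i]]_(I, B)) :
  (0 < B)%N -> (0 < U)%N -> (0 < I)%N -> (0 < D)%N -> (U + I <= B)%N ->
  \rank (row_mx H J) = (U + I)%N ->
  qpsk_mx SD ->
  is_pinv J Jdag ->
  ~ eclipsed SD WD ->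
  let YD := H *m SD + J *m WD in
  let obj := fun (P : 'M[R[i]]_B) (St : 'M[R[i]]_(U, D)) =>
               frob2 (P *m (YD - H *m St)) in
  let Phat := 1%:M - J *m Jdag in
  grass_proj B (B - I)%N Phat /\
  forall (P : 'M[R[i]]_B) (St : 'M[R[i]]_(U, D)),
    grass_proj B (B - I)%N P -> qpsk_mx St ->
    obj Phat SD <= obj P St /\ (obj P St <= obj Phat SD -> P = Phat /\ St = SD).
Proof.
move=> _ U_gt0 _ D_gt0 _ rHJ qS pJ not_ecl YD obj Phat.
have rJ : \rank J = I := rank_row_mx_fullr rHJ.
have le_IB : (I <= B)%N by rewrite -rJ rank_leq_row.
have YD_SD : YD - H *m SD = J *m WD by rewrite /YD addrC addKr.
have obj_SD : obj Phat SD = 0.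
  case: pJ => JJdJ _ _ _; apply/eqP.
  by rewrite /obj YD_SD mulmxBl mul1mx mulmxA JJdJ subrr frob2_eq0.
split; first exact: pinv_grass_proj.
move=> P St gP qSt; rewrite obj_SD; split; first exact: frob2_ge0.
move=> obj_le0; have PX0 : P *m (YD - H *m St) = 0.
  by apply/eqP; rewrite -frob2_eq0 eq_le obj_le0 frob2_ge0.
have St_SD : St = SD.
  have [//|St_neq] := eqVneq St SD; case: not_ecl.
  exists St; split=> //; first exact/eqP.
  rewrite -(mxrank_mulfree_l _ rHJ) mul_row_col mulmxBr addrAC -/YD.
  exact: grass_proj_kernel_rank le_IB gP PX0.
split=> //; apply: grass_proj_pinvE => //; subst St.
have [WDinv WD_WDinv] := row_freeP (not_eclipsed_row_free U_gt0 D_gt0 qS not_ecl).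
by rewrite -[J]mulmx1 -WD_WDinv !mulmxA -(mulmxA P) -YD_SD PX0 mul0mx.
Qed.
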